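(* Let $\Phi=(\varphi_n)_{n\in\mathbb{N}}$ be a depth-bounded fuzzy bisimulation between fuzzy automata $\mathcal{A}$ and $\mathcal{A}'$. Then for every $n\in\mathbb{N}$ and every $(x,x')\in A\times A'$: $\varphi_n(x,x')\le E(\mathbf{L}^{\le n}(\mathcal{A}_x),\mathbf{L}^{\le n}(\mathcal{A}'_{x'}))$ and $\|\varphi_n\|^b_{\mathcal{A},\mathcal{A}'}\le E(\mathbf{L}^{\le n}(\mathcal{A}),\mathbf{L}^{\le n}(\mathcal{A}'))$.
   Context: $\mathcal{L}=\langle L,\le,\otimes,\Rightarrow,0,1\rangle$ is a complete residuated lattice: $\langle L,\le,0,1\rangle$ is a complete lattice with least element $0$ and greatest element $1$, $\langle L,\otimes,1\rangle$ is a commutative monoid, and $x\otimes y\le z$ iff $x\le (y\Rightarrow z)$; $x\Leftrightarrow y=(x\Rightarrow y)\wedge(y\Rightarrow x)$. Fuzzy sets/relations are maps into $L$ ordered pointwise; $\varphi^{-1}(b,a)=\varphi(a,b)$; $(\varphi\circ\psi)(a,c)=\bigvee_b\varphi(a,b)\otimes\psi(b,c)$, $(f\circ\varphi)(b)=\bigvee_a f(a)\otimes\varphi(a,b)$, $(\varphi\circ g)(a)=\bigvee_b\varphi(a,b)\otimes g(b)$; $S(g,f)=\bigwedge_a(g(a)\Rightarrow f(a))$, $E(g,f)=\bigwedge_a(g(a)\Leftrightarrow f(a))$. A fuzzy automaton over $\Sigma$ is $\mathcal{A}=\langle A,\delta^{\mathcal{A}},\sigma^{\mathcal{A}},\tau^{\mathcal{A}}\rangle$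 with $A$ nonempty, $\delta^{\mathcal{A}}:A\times\Sigma\times A\to L$, $\sigma^{\mathcal{A}},\tau^{\mathcal{A}}:A\to L$; $\delta^{\mathcal{A}}_s(x,y)=\delta^{\mathcal{A}}(x,s,y)$; similarly $\mathcal{A}'$ with states $A'$. $\mathcal{A}_x$ differs from $\mathcal{A}$ only in that its initial fuzzy set is $\{x:1\}$. $\mathbf{L}(\mathcal{A})(s_1\cdots s_k)=\sigma^{\mathcal{A}}\circ\delta^{\mathcal{A}}_{s_1}\circ\cdots\circ\delta^{\mathcal{A}}_{s_k}\circ\tau^{\mathcal{A}}$; $\mathbf{L}^{\le n}(\mathcal{A})(w)=\mathbf{L}(\mathcal{A})(w)$ if $|w|\le n$, else $0$. For $\varphi:A\times A'\to L$: $\|\varphi\|_{\mathcal{A},\mathcal{A}'}=S(\sigma^{\mathcal{A}},\sigma^{\mathcal{A}'}\circ\varphi^{-1})$ and $\|\varphi\|^b_{\mathcal{A},\mathcal{A}'}=\|\varphi\|_{\mathcal{A},\mathcal{A}'}\wedge\|\varphi^{-1}\|_{\mathcal{A}',\mathcal{A}}$. A depth-bounded fuzzy bisimulation between $\mathcal{A}$ and $\mathcal{A}'$ is a sequence $(\varphi_n)_{n\in\mathbb{N}}$ of fuzzy relations $A\times A'\to L$ with $\varphi_n\le\varphi_{n-1}$ ($n\ge1$), $\varphi_0^{-1}\circ\tau^{\mathcal{A}}\le\tau^{\mathcal{A}'}$, $\varphi_0\circ\tau^{\mathcal{A}'}\le\tau^{\mathcal{A}}$, and for all $s\in\Sigma,n\ge1$: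 $\varphi_n^{-1}\circ\delta^{\mathcal{A}}_s\le\delta^{\mathcal{A}'}_s\circ\varphi_{n-1}^{-1}$ and $\varphi_n\circ\delta^{\mathcal{A}'}_s\le\delta^{\mathcal{A}}_s\circ\varphi_{n-1}$. *)

From Stdlib Require Import List Arith.
Import ListNotations.
Set Implicit Arguments.

Record CRL := {
  car :> Type;
  le : car -> car -> Prop;
  le_refl : forall x, le x x;
  le_trans : forall x y z, le x y -> le y z -> le x z;
  le_antisym : forall x y, le x y -> le y x -> x = y;
  sup : (car -> Prop) -> car;
  sup_ub : forall (S : car -> Prop) x, S x -> le x (sup S);
  sup_least : forall (S : car -> Prop) y, (forall x, S x -> le x y) -> le (sup S) y;
  inf : (car -> Prop) -> car;
  inf_lb : forall (S : car -> Prop) x, S x -> le (inf S) x;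
  inf_greatest : forall (S : car -> Prop) y, (forall x, S x -> le y x) -> le y (inf S);
  zero : car;
  one : car;
  zero_least : forall x, le zero x;
  one_greatest : forall x, le x one;
  tensor : car -> car -> car;
  tensorC : forall x y, tensor x y = tensor y x;
  tensorA : forall x y z, tensor x (tensor y z) = tensor (tensor x y) z;
  tensor1 : forall x, tensor x one = x;
  res : car -> car -> car;
  adjoint : forall x y z, le (tensor x y) z <-> le x (res y z)
}.

Arguments le {c}. Arguments sup {c}. Arguments inf {c}.
Arguments zero {c}. Arguments one {c}. Arguments tensor {c}. Arguments res {c}.

Section FuzzyDefs.
Variable L : CRL.

Definition bigsup (I : Type) (f : I -> L) : L := sup (fun y => exists i, y = f i).
Definition biginf (I : Type) (f : I -> L) : L := inf (fun y => exists i, y = f i).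
Definition meet (x y : L) : L := inf (fun z => z = x \/ z = y).
Definition biimp (x y : L) : L := meet (res x y) (res y x).

Definition frel (A B : Type) := A -> B -> L.
Definition finv (A B : Type) (phi : frel A B) : frel B A := fun b a => phi a b.
Definition leR (A B : Type) (phi psi : frel A B) : Prop := forall a b, le (phi a b) (psi a b).
Definition compRR (A B C : Type) (phi : frel A B) (psi : frel B C) : frel A C :=
  fun a c => bigsup (fun b : B => tensor (phi a b) (psi b c)).
Definition compSR (A B : Type) (f : A -> L) (phi : frel A B) : B -> L :=
  fun b => bigsup (fun a : A => tensor (f a) (phi a b)).
Definition compRS (A B : Type) (phi : frel A B) (g : B -> L) : A -> L :=
  fun a => bigsup (fun b : B => tensor (phi a b) (g b)).
Definition leS (A : Type) (f g : A -> L) : Prop := forall a, le (f a) (g a).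

Definition Sdeg (A : Type) (g f : A -> L) : L := biginf (fun a : A => res (g a) (f a)).
Definition Edeg (A : Type) (g f : A -> L) : L := biginf (fun a : A => biimp (g a) (f a)).

(** singleton fuzzy set {x : 1}: value 1 at x, 0 elsewhere
    (sup {1} = 1 if x = y, sup of the empty set = 0 otherwise) *)
Definition single (A : Type) (x : A) : A -> L := fun y => sup (fun v => v = one /\ x = y).

Variable Sigma : Type.

Record FA := {
  st : Type;
  st_inh : st;
  delta : st -> Sigma -> st -> L;
  sigma : st -> L;
  tau : st -> L
}.

Definition deltas (M : FA) (s : Sigma) : frel (st M) (st M) := fun x y => delta M x s y.

Definition FA_at (M : FA) (x : st M) : FA :=
  {| st := st M; st_inh := x; delta := delta M; sigma := single x; tau := tau M |}.

Definition lang (M : FA) (w : list Sigma) : L :=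
  let f := fold_left (fun g s => compSR g (deltas M s)) w (sigma M) in
  bigsup (fun a : st M => tensor (f a) (tau M a)).

Definition lang_le (n : nat) (M : FA) (w : list Sigma) : L :=
  if Nat.leb (length w) n then lang M w else zero.

Definition rnorm (M M' : FA) (phi : frel (st M) (st M')) : L :=
  Sdeg (sigma M) (compSR (sigma M') (finv phi)).
Definition rnorm_b (M M' : FA) (phi : frel (st M) (st M')) : L :=
  meet (rnorm M M' phi) (rnorm M' M (finv phi)).

Definition db_bisim (M M' : FA) (Phi : nat -> frel (st M) (st M')) : Prop :=
  (forall n, 1 <= n -> leR (Phi n) (Phi (n - 1))) /\
  leS (compRS (finv (Phi 0)) (tau M)) (tau M') /\
  leS (compRS (Phi 0) (tau M')) (tau M) /\
  (forall (s : Sigma) n, 1 <= n ->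
     leR (compRR (finv (Phi n)) (deltas M s)) (compRR (deltas M' s) (finv (Phi (n - 1))))) /\
  (forall (s : Sigma) n, 1 <= n ->
     leR (compRR (Phi n) (deltas M' s)) (compRR (deltas M s) (Phi (n - 1)))).

End FuzzyDefs.
Arguments db_bisim {L Sigma} M M' Phi.
Arguments rnorm_b {L Sigma} M M' phi.
Arguments rnorm {L Sigma} M M' phi.
Arguments FA_at {L Sigma} M x.
Arguments Edeg {L A} g f.
Arguments Sdeg {L A} g f.
Arguments lang_le {L Sigma} n M w.
Arguments lang {L Sigma} M w.

(** Writing [accept M w x] for the degree to which the word [w]
    is accepted from the state [x] (i.e. delta_{s1} o ... o delta_{sk} o tau
    evaluated at x), the language of [M] is  sigma o accept, and the language
    of the automaton started in [x] is accept at [x].  The heart of the proof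
    is the inequality
        Phi n (x,x') (x) accept M w x  <=  accept M' w x'     for |w| <= n,
    proved by induction on [w]; each step is an instance of one generic
    "transfer" inequality that pushes a bound through a sup-(x)-composition.
    The converse inequality comes for free, because the pointwise converse of a
    depth-bounded bisimulation is again one (from M' to M).  Both claims of the
    theorem then follow by residuation, since an equality degree E(g,f) is
    bounded below by c as soon as c (x) g <= f and c (x) f <= g pointwise; for
    the second claim the transfer lemma is applied once more, to sigma. *)
From Stdlib Require Import List Arith Lia.
Import ListNotations.
Arguments bigsup {L I} f.
Arguments biginf {L I} f.
Arguments meet {L} x y.
Arguments single {L A} x _.
Arguments compRS {L A B} phi g _.
Arguments compSR {L A B} f phi _.
Arguments finv {L A B} phi _ _.
Arguments deltas {L Sigma} M s _ _.
Arguments leR {L A B} phi psi.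
Arguments tau {L Sigma} _ _.
Arguments sigma {L Sigma} _ _.
Arguments st {L Sigma} _.

Section ResiduatedLattice.
Context {L : CRL}.

Lemma tensor_mono_l (a b c : L) : le a b -> le (tensor a c) (tensor b c).
Proof. intro h. apply adjoint. eapply le_trans; [exact h|]. apply adjoint, le_refl. Qed.

Lemma tensor_mono_r (a b c : L) : le a b -> le (tensor c a) (tensor c b).
Proof. intro h. rewrite (tensorC _ c a), (tensorC _ c b). now apply tensor_mono_l. Qed.

Lemma tensor_zero (x : L) : le (tensor x zero) zero.
Proof. rewrite tensorC. apply adjoint, zero_least. Qed.

Lemma bigsup_ub {I} (f : I -> L) i : le (f i) (bigsup f).
Proof. apply sup_ub. now exists i. Qed.

Lemma bigsup_least {I} (f : I -> L) y : (forall i, le (f i) y) -> le (bigsup f) y.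
Proof. intro h. apply sup_least. intros x [i ->]. auto. Qed.

Lemma biginf_lb {I} (f : I -> L) i : le (biginf f) (f i).
Proof. apply inf_lb. now exists i. Qed.

Lemma biginf_greatest {I} (f : I -> L) y : (forall i, le y (f i)) -> le y (biginf f).
Proof. intro h. apply inf_greatest. intros x [i ->]. auto. Qed.

Lemma bigsup_ext {I} (f g : I -> L) : (forall i, f i = g i) -> bigsup f = bigsup g.
Proof.
  intro h. apply le_antisym; apply bigsup_least; intro i;
    [rewrite h | rewrite <- h]; apply bigsup_ub.
Qed.

Lemma bigsup_swap {I J} (f : I -> J -> L) :
  bigsup (fun i => bigsup (fun j => f i j)) = bigsup (fun j => bigsup (fun i => f i j)).
Proof.
  apply le_antisym; apply bigsup_least; intro i; apply bigsup_least; intro j.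
  - eapply le_trans; [|apply (bigsup_ub _ j)]. apply (bigsup_ub (fun i => f i j)).
  - eapply le_trans; [|apply (bigsup_ub _ j)]. apply (bigsup_ub (fun i => f j i)).
Qed.

(** The tensor distributes over arbitrary joins (it is a left adjoint). *)
Lemma tensor_bigsup_l {I} (f : I -> L) y :
  tensor (bigsup f) y = bigsup (fun i => tensor (f i) y).
Proof.
  apply le_antisym.
  - apply adjoint, bigsup_least. intro i. apply adjoint.
    apply (bigsup_ub (fun i => tensor (f i) y)).
  - apply bigsup_least. intro i. apply tensor_mono_l, bigsup_ub.
Qed.

Lemma tensor_bigsup_r {I} (f : I -> L) y :
  tensor y (bigsup f) = bigsup (fun i => tensor y (f i)).
Proof. rewrite tensorC, tensor_bigsup_l. apply bigsup_ext. intro; apply tensorC. Qed.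

Lemma meet_greatest (a b c : L) : le c a -> le c b -> le c (meet a b).
Proof. intros h1 h2. apply inf_greatest. intros z [-> | ->]; auto. Qed.

Lemma meet_lb1 (a b : L) : le (meet a b) a.
Proof. apply inf_lb. auto. Qed.

Lemma meet_lb2 (a b : L) : le (meet a b) b.
Proof. apply inf_lb. auto. Qed.

Lemma bigsup_single {A} (x : A) (g : A -> L) :
  bigsup (fun a => tensor (single x a) (g a)) = g x.
Proof.
  apply le_antisym.
  - apply bigsup_least. intro a. apply adjoint, sup_least.
    intros v [-> ->]. apply adjoint. rewrite tensorC, tensor1. apply le_refl.
  - eapply le_trans; [|apply (bigsup_ub (fun a => tensor (single x a) (g a)) x)].
    rewrite tensorC, <- (tensor1 _ (g x)) at 1. apply tensor_mono_r, sup_ub. auto.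
Qed.

Lemma transfer {A B} (c : L) (f g : A -> L) (f' g' : B -> L) (R : A -> B -> L) :
  (forall a, le (tensor c (f a)) (bigsup (fun b => tensor (f' b) (R a b)))) ->
  (forall a b, le (tensor (R a b) (g a)) (g' b)) ->
  le (tensor c (bigsup (fun a => tensor (f a) (g a))))
     (bigsup (fun b => tensor (f' b) (g' b))).
Proof.
  intros hf hg. rewrite tensor_bigsup_r. apply bigsup_least. intro a.
  rewrite tensorA. eapply le_trans; [apply tensor_mono_l, hf|].
  rewrite tensor_bigsup_l. apply bigsup_least. intro b. rewrite <- tensorA.
  eapply le_trans; [|apply (bigsup_ub (fun b => tensor (f' b) (g' b)) b)].
  apply tensor_mono_r, hg.
Qed.

Lemma le_Edeg {A} (c : L) (g f : A -> L) :
  (forall a, le (tensor c (g a)) (f a)) -> (forall a, le (tensor c (f a)) (g a)) ->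
  le c (Edeg g f).
Proof.
  intros h1 h2. apply biginf_greatest. intro a.
  apply meet_greatest; apply adjoint; [apply h1 | apply h2].
Qed.

Context {Sigma : Type}.

Fixpoint accept (M : FA L Sigma) (w : list Sigma) : st M -> L :=
  match w with
  | [] => tau M
  | s :: w => compRS (deltas M s) (accept M w)
  end.

(** Associativity of composition: reading the word forwards from any initial
    fuzzy set [f] is the same as composing [f] with the acceptance degrees. *)
Lemma forward_backward (M : FA L Sigma) w : forall f,
  bigsup (fun a => tensor (fold_left (fun g s => compSR g (deltas M s)) w f a) (tau M a))
  = bigsup (fun a => tensor (f a) (accept M w a)).
Proof.
  induction w as [|s w IH]; intro f; [reflexivity|].
  simpl. rewrite IH. unfold compSR, compRS.
  transitivity (bigsup (fun b => bigsup (fun a =>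
                  tensor (tensor (f a) (deltas M s a b)) (accept M w b)))).
  { apply bigsup_ext. intro b. apply tensor_bigsup_l. }
  rewrite bigsup_swap. apply bigsup_ext. intro a. rewrite tensor_bigsup_r.
  apply bigsup_ext. intro b. symmetry. apply tensorA.
Qed.

Lemma lang_accept (M : FA L Sigma) w :
  lang M w = bigsup (fun a => tensor (sigma M a) (accept M w a)).
Proof. apply forward_backward. Qed.

Lemma accept_at (M : FA L Sigma) x w a : accept (FA_at M x) w a = accept M w a.
Proof.
  revert a; induction w as [|s w IH]; intro a; [reflexivity|].
  simpl. unfold compRS. apply bigsup_ext. intro b. now rewrite IH.
Qed.

Lemma lang_at (M : FA L Sigma) x w : lang (FA_at M x) w = accept M w x.
Proof.
  rewrite lang_accept, <- (bigsup_single x (accept M w)).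
  apply bigsup_ext. intro a. now rewrite accept_at.
Qed.

(** To bound E(L^{<=n}(M), L^{<=n}(M')) it suffices to compare the languages on
    words of length at most n, the truncated values being 0 elsewhere. *)
Lemma le_Edeg_lang_le (M M' : FA L Sigma) n (c : L) :
  (forall w, length w <= n -> le (tensor c (lang M w)) (lang M' w)) ->
  (forall w, length w <= n -> le (tensor c (lang M' w)) (lang M w)) ->
  le c (Edeg (lang_le n M) (lang_le n M')).
Proof.
  intros h1 h2. apply le_Edeg; intro w; unfold lang_le;
    destruct (Nat.leb (length w) n) eqn:E; try apply tensor_zero;
    apply Nat.leb_le in E; auto.
Qed.

Lemma db_bisim_converse {M M' : FA L Sigma} {Phi : nat -> frel L (st M) (st M')} :
  db_bisim M M' Phi -> db_bisim M' M (fun n => finv (Phi n)).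
Proof.
  intros (Hmono & Htau & Htau' & Hdelta & Hdelta').
  repeat split; auto. intros n hn a b. apply Hmono, hn.
Qed.

Lemma rnorm_b_converse (M M' : FA L Sigma) (phi : frel L (st M) (st M')) :
  le (rnorm_b M M' phi) (rnorm_b M' M (finv phi)).
Proof. apply meet_greatest; [apply meet_lb2 | apply meet_lb1]. Qed.

Section Bisimulation.
Context {M M' : FA L Sigma} {Phi : nat -> frel L (st M) (st M')}.
Hypothesis Hbis : db_bisim M M' Phi.

Lemma db_bisim_le0 n : leR (Phi n) (Phi 0).
Proof.
  destruct Hbis as [Hmono _].
  induction n as [|n IH]; intros a b; [apply le_refl|].
  eapply le_trans; [|apply IH].
  specialize (Hmono (S n)). replace (S n - 1) with n in Hmono by lia.
  apply Hmono. lia.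
Qed.

Lemma db_bisim_accept w : forall n, length w <= n -> forall x x',
  le (tensor (Phi n x x') (accept M w x)) (accept M' w x').
Proof.
  destruct Hbis as (_ & Htau & _ & Hdelta & _).
  induction w as [|s w IH]; intros n hn x x'.
  - eapply le_trans; [apply tensor_mono_l, db_bisim_le0|].
    eapply le_trans; [|apply Htau].
    apply (bigsup_ub (fun b => tensor (Phi 0 b x') (tau M b)) x).
  - destruct n as [|m]; [simpl in hn; lia|].
    assert (hm : length w <= m) by (simpl in hn; lia).
    specialize (Hdelta s (S m) ltac:(lia)).
    replace (S m - 1) with m in Hdelta by lia.
    apply (transfer _ _ _ _ _ (fun y y' => Phi m y y')); [|now apply IH].
    intro y. eapply le_trans; [|apply Hdelta].
    apply (bigsup_ub (fun b => tensor (Phi (S m) b x') (deltas M s b y)) x).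
Qed.

Lemma rnorm_b_sigma n a :
  le (tensor (rnorm_b M M' (Phi n)) (sigma M a))
     (bigsup (fun a' => tensor (sigma M' a') (Phi n a a'))).
Proof.
  apply adjoint. eapply le_trans; [apply meet_lb1|]. unfold rnorm, Sdeg.
  apply (biginf_lb (fun b => res (sigma M b) _) a).
Qed.

End Bisimulation.
End ResiduatedLattice.

Theorem mainTheorem14 (L : CRL) (Sigma : Type) (M M' : FA L Sigma)
  (Phi : nat -> frel L (st M) (st M')) :
  db_bisim M M' Phi ->
  forall n : nat,
    (forall (x : st M) (x' : st M'),
        le (Phi n x x') (Edeg (lang_le n (FA_at M x)) (lang_le n (FA_at M' x')))) /\
    le (rnorm_b M M' (Phi n)) (Edeg (lang_le n M) (lang_le n M')).
Proof.
  intros Hbis n.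
  pose proof (db_bisim_converse Hbis) as Hconv.
  split.
  - intros x x'. apply le_Edeg_lang_le; intros w hw; rewrite !lang_at.
    + exact (db_bisim_accept Hbis w _ hw x x').
    + exact (db_bisim_accept Hconv w _ hw x' x).
  - apply le_Edeg_lang_le; intros w hw; rewrite !lang_accept.
    + apply (transfer _ _ _ _ _ (fun a a' => Phi n a a')).
      * apply rnorm_b_sigma.
      * exact (fun a a' => db_bisim_accept Hbis w _ hw a a').
    + apply (transfer _ _ _ _ _ (fun a' a => Phi n a a')).
      * intro a'. eapply le_trans; [apply tensor_mono_l, rnorm_b_converse|].
        exact (rnorm_b_sigma (Phi := fun k => finv (Phi k)) n a').
      * exact (fun a' a => db_bisim_accept Hconv w _ hw a' a).
Qed.
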